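(* Let \(X\) be a nonempty set and let \(\Phi\) be a mapping with domain \(X^{2}\). Then the following conditions are equivalent. (i) There is a totally ordered set \(Q\) such that \(\Phi\) is combinatorially similar to a \(Q\)-ultrametric. (ii) There is a poset \(Q\) such that \(\Phi\) is combinatorially similar to a \(Q\)-ultrametric. (iii) \(\Phi\) is symmetric, the transitive closure \(u_{\Phi}^{t}\) of \(u_{\Phi}\) is antisymmetric, there is \(a_0 \in \Phi(X^{2})\) with \(\Phi^{-1}(a_0) = \Delta_{X}:=\{\langle x,x\rangle:x\in X\}\), and for every triple \(\langle x_1, x_2, x_3\rangle\) of points of \(X\) there is a permutation \((i_1,i_2,i_3)\) of \((1,2,3)\) such that \(\Phi(x_{i_1}, x_{i_2}) = \Phi(x_{i_2}, x_{i_3})\). (iv) There is \(b_0 \in \Phi(X^{2})\) such that \(\Phi^{-1}(b_0) = \Delta_{X}\), the binary relation \(\preccurlyeq_{\Phi} := u_{\Phi}^{t} \cup \Delta_{\Phi(X^{2})}\) is a partial order on \(\Phi(X^{2})\), \(b_0\) is the smallest element of \((\Phi(X^{2}), \preccurlyeq_{\Phi})\), and \(\Phi\) is a \(\preccurlyeq_{\Phi}\)-ultrametric on \(X\).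
   Context: For a mapping \(F\) with domain \(A\), \(F(A)\) denotes its range; \(\Delta_S=\{\langle s,s\rangle: s\in S\}\). Let \((Q,\preccurlyeq_Q)\) be a poset with a smallest element \(q_0\) and \(Z\) a nonempty set. A mapping \(d\colon Z^2\to Q\) is a \(Q\)-pseudoultrametric (= \(\preccurlyeq_Q\)-pseudoultrametric) if \(d\) is symmetric, \(d(z,z)=q_0\) for all \(z\in Z\), and for every triple \(\langle z_1,z_2,z_3\rangle\) of points of \(Z\) there is a permutation \((i_1,i_2,i_3)\) of \((1,2,3)\) with \(d(z_{i_1},z_{i_3})\preccurlyeq_Q d(z_{i_1},z_{i_2})\) and \(d(z_{i_1},z_{i_2})=d(z_{i_2},z_{i_3})\); it is a \(Q\)-ultrametric (= \(\preccurlyeq_Q\)-ultrametric) if moreover \(d(x,y)=q_0\) iff \(x=y\). For nonempty sets \(X,Y\) and mappings \(\Phi\) with domain \(X^2\), \(\Psi\) with domain \(Y^2\), \(\Phi\) is combinatorially similar to \(\Psi\) if there are bijections \(f\colon \Phi(X^2)\to\Psi(Y^2)\) and \(g\colon Y\to X\) with \(\Psi(x,y)=f(\Phi(g(x),g(y)))\) for all \(x,y\in Y\). For \(\Phi\) with domain \(X^2\) and \(Y=\Phi(X^2)\), \(\langle y_1,y_2\rangle\in u_\Phi\) iff \(y_1,y_2\in Y\) and there are \(x_1,x_2,x_3\in X\) with \(y_1=\Phi(x_1,x_3)\) and \(y_2=\Phi(x_1,x_2)=\Phi(x_2,x_3)\). The transitive closure is \(\gamma^t=\bigcup_{n\ge1}\gamma^n\)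 with \(\gamma^{n+1}=\gamma^n\circ\gamma\), where \(\langle x,y\rangle\in\alpha\circ\beta\) iff there is \(z\) with \(\langle x,z\rangle\in\alpha\), \(\langle z,y\rangle\in\beta\). *)

From mathcomp Require Import all_boot.
From mathcomp Require Import fingroup perm.

Set Implicit Arguments.
Unset Strict Implicit.
Unset Printing Implicit Defensive.

Definition trip {X : Type} (x1 x2 x3 : X) (i : 'I_3) : X :=
  match val i with 0 => x1 | 1 => x2 | _ => x3 end.

Definition i0 : 'I_3 := @Ordinal 3 0 isT.
Definition i1 : 'I_3 := @Ordinal 3 1 isT.
Definition i2 : 'I_3 := @Ordinal 3 2 isT.

Definition rng {X A : Type} (Phi : X -> X -> A) (a : A) : Prop :=
  exists x y, Phi x y = a.

Definition is_poset {Q : Type} (le : Q -> Q -> Prop) : Prop :=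
  (forall q, le q q) /\
  (forall p q, le p q -> le q p -> p = q) /\
  (forall p q r, le p q -> le q r -> le p r).

Definition is_toset {Q : Type} (le : Q -> Q -> Prop) : Prop :=
  is_poset le /\ (forall p q, le p q \/ le q p).

Definition is_smallest {Q : Type} (le : Q -> Q -> Prop) (q0 : Q) : Prop :=
  forall q, le q0 q.

Definition is_Q_pseudoultrametric {Z Q : Type} (le : Q -> Q -> Prop) (q0 : Q)
  (d : Z -> Z -> Q) : Prop :=
  (forall z1 z2, d z1 z2 = d z2 z1) /\
  (forall z, d z z = q0) /\
  (forall z1 z2 z3 : Z, exists s : {perm 'I_3},
     let z := trip z1 z2 z3 in
     le (d (z (s i0)) (z (s i2))) (d (z (s i0)) (z (s i1))) /\
     d (z (s i0)) (z (s i1)) = d (z (s i1)) (z (s i2))).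

Definition is_Q_ultrametric {Z Q : Type} (le : Q -> Q -> Prop) (q0 : Q)
  (d : Z -> Z -> Q) : Prop :=
  is_Q_pseudoultrametric le q0 d /\ (forall x y, d x y = q0 <-> x = y).

(* Phi (domain X^2) is combinatorially similar to Psi (domain Y^2):
   bijections f : Phi(X^2) -> Psi(Y^2) and g : Y -> X with
   Psi(x,y) = f(Phi(g x, g y)). f is given as a map A -> B that restricts
   to a bijection from the range of Phi onto the range of Psi. *)
Definition comb_similar {X A Y B : Type} (Phi : X -> X -> A) (Psi : Y -> Y -> B)
  : Prop :=
  exists (f : A -> B) (g : Y -> X),
    (forall a, rng Phi a -> rng Psi (f a)) /\
    (forall a1 a2, rng Phi a1 -> rng Phi a2 -> f a1 = f a2 -> a1 = a2) /\
    (forall b, rng Psi b -> exists2 a, rng Phi a & f a = b) /\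
    bijective g /\
    (forall x y, Psi x y = f (Phi (g x) (g y))).

Definition u_rel {X A : Type} (Phi : X -> X -> A) (y1 y2 : A) : Prop :=
  rng Phi y1 /\ rng Phi y2 /\
  exists x1 x2 x3, y1 = Phi x1 x3 /\ y2 = Phi x1 x2 /\ y2 = Phi x2 x3.

Definition rel_comp {A : Type} (al be : A -> A -> Prop) (x y : A) : Prop :=
  exists z, al x z /\ be z y.

Fixpoint rel_pow {A : Type} (ga : A -> A -> Prop) (n : nat) : A -> A -> Prop :=
  match n with
  | 0 => ga            (* gamma^1 *)
  | n'.+1 => rel_comp (rel_pow ga n') ga
  end.

Definition trans_clos {A : Type} (ga : A -> A -> Prop) (x y : A) : Prop :=
  exists n, rel_pow ga n x y.

Definition le_Phi {X A : Type} (Phi : X -> X -> A) (y1 y2 : A) : Prop :=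
  trans_clos (u_rel Phi) y1 y2 \/ (y1 = y2 /\ rng Phi y1).

Definition partial_order_on {A : Type} (S : A -> Prop) (R : A -> A -> Prop) : Prop :=
  (forall a b, R a b -> S a /\ S b) /\
  (forall a, S a -> R a a) /\
  (forall a b, S a -> S b -> R a b -> R b a -> a = b) /\
  (forall a b c, S a -> S b -> S c -> R a b -> R b c -> R a c).

From mathcomp Require Import all_boot.
From mathcomp Require Import fingroup perm.
From mathcomp Require Import boolp classical_sets.

Set Implicit Arguments.
Unset Strict Implicit.
Unset Printing Implicit Defensive.

(** A poset-valued ultrametric d satisfies d(x1,x3) <= d(x1,x2) whenever
    d(x1,x2) = d(x2,x3).  Pulled back along a combinatorial similarity, this
    puts u_Phi, hence its transitive closure, inside a partial order, which
    makes u_Phi^t antisymmetric.  Conversely, under (iii) the reflexive closure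
    of u_Phi^t is a partial order on the range of Phi with the diagonal value as
    least element, and the isosceles condition of (iii) is then exactly the
    ultrametric triangle condition, so Phi is an ultrametric for its own order.
    Total orders come from Szpilrajn's extension theorem, since enlarging the
    order of Q preserves the ultrametric property. *)

Local Open Scope classical_set_scope.

Section TotalExtension.
Variable Q : Type.

Lemma poset_extend (R : Q -> Q -> Prop) (p q : Q) :
  is_poset R -> ~ R q p -> is_poset (fun a b => R a b \/ (R a p /\ R q b)).
Proof.
move=> [R_refl [R_anti R_trans]] nRqp; split; [|split].
- by move=> a; left.
- move=> a b [Rab|[Rap Rqb]] [Rba|[Rbp Rqa]].
  + exact: R_anti.
  + by case: nRqp; apply: R_trans Rqa (R_trans _ _ _ Rab Rbp).
  + by case: nRqp; apply: R_trans Rqb (R_trans _ _ _ Rba Rap).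
  + by case: nRqp; apply: R_trans Rqb Rbp.
- move=> a b c [Rab|[Rap Rqb]] [Rbc|[Rbp Rqc]].
  + by left; apply: R_trans Rab Rbc.
  + by right; split=> //; apply: R_trans Rab Rbp.
  + by right; split=> //; apply: R_trans Rqb Rbc.
  + by case: nRqp; apply: R_trans Rqb Rbp.
Qed.

Variable le : Q -> Q -> Prop.
Hypothesis le_poset : is_poset le.

Definition rel_adjoin (S : set (Q * Q)) (a b : Q) : Prop := le a b \/ S (a, b).

Lemma poset_adjoin_bigcup (F : set (set (Q * Q))) :
    (forall S, F S -> is_poset (rel_adjoin S)) -> total_on F subset ->
  is_poset (rel_adjoin (\bigcup_(S in F) S)).
Proof.
move=> F_poset F_chain; set U := \bigcup_(S in F) S.
have adjoin_U S : F S -> forall a b, rel_adjoin S a b -> rel_adjoin U a b.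
  by move=> FS a b [lab|Sab]; [left|right; exists S].
(* Two pairs of the union already lie in one member of the chain (or in le). *)
have common a b c d : rel_adjoin U a b -> rel_adjoin U c d ->
    exists R, [/\ is_poset R, R a b, R c d & forall x y, R x y -> rel_adjoin U x y].
  move=> [lab|[S FS Sab]] [lcd|[T FT Tcd]].
  - by exists le; split=> // x y; left.
  - by exists (rel_adjoin T); split; [exact: F_poset|left|right|exact: adjoin_U].
  - by exists (rel_adjoin S); split; [exact: F_poset|right|left|exact: adjoin_U].
  - have [ST|TS] := F_chain S T FS FT.
    + exists (rel_adjoin T).
      by split; [exact: F_poset|right; exact: ST|right|exact: adjoin_U].
    + exists (rel_adjoin S).
      by split; [exact: F_poset|right|right; exact: TS|exact: adjoin_U].
have [le_refl _] := le_poset.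
split; [|split].
- by move=> a; left; apply: le_refl.
- move=> a b ab ba; have [R [[_ [R_anti _]] Rab Rba _]] := common _ _ _ _ ab ba.
  exact: R_anti.
- move=> a b c ab bc; have [R [[_ [_ R_trans]] Rab Rbc RU]] := common _ _ _ _ ab bc.
  exact/RU/(R_trans _ _ _ Rab Rbc).
Qed.

Theorem poset_total_extension :
  exists le', is_toset le' /\ forall p q, le p q -> le' p q.
Proof.
have [|S [S_poset S_max]] := @Zorn_bigcup (Q * Q) (fun S => is_poset (rel_adjoin S)).
  by move=> F F_poset; apply: poset_adjoin_bigcup.
exists (rel_adjoin S); split; last by move=> p q; left.
split=> // p q; set R := rel_adjoin S.
have [|nRpq] := pselect (R p q); first by left.
have [|nRqp] := pselect (R q p); first by right.
exfalso; have [R_refl _] := S_poset.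
pose T := S `|` [set z | R z.1 p /\ R q z.2].
apply: (S_max T).
  split; first exact: subsetUl.
  by move=> TS; apply/nRpq; right; apply/TS; right; split; apply: R_refl.
suff -> : rel_adjoin T = fun a b => R a b \/ (R a p /\ R q b) by exact: poset_extend.
apply/funext=> a; apply/funext=> b; apply/propext.
by rewrite /T /setU /mkset /= /R /rel_adjoin; tauto.
Qed.

End TotalExtension.

Section TransClos.
Variables (T : Type) (R : T -> T -> Prop).

Lemma trans_closW x y : R x y -> trans_clos R x y.
Proof. by exists 0. Qed.

Lemma trans_clos_ind (P : T -> T -> Prop) :
    (forall x y, R x y -> P x y) -> (forall x y z, P x y -> P y z -> P x z) ->
  forall x y, trans_clos R x y -> P x y.
Proof.
move=> PR P_trans x y [n]; elim: n x y => [|n IHn] x y /=; first exact: PR.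
by case=> z [Rxz Rzy]; apply: P_trans (IHn _ _ Rxz) (PR _ _ Rzy).
Qed.

Lemma trans_clos_trans x y z :
  trans_clos R x y -> trans_clos R y z -> trans_clos R x z.
Proof.
move=> Rxy Ryz; move: Ryz x Rxy.
apply: (@trans_clos_ind (fun y z => forall x, trans_clos R x y -> trans_clos R x z)).
  by move=> {}y {}z Ryz x [n Rxy]; exists n.+1, y.
by move=> a b c Pab Pbc x /Pab /Pbc.
Qed.

Variable S : T -> Prop.
Hypothesis R_field : forall a b, R a b -> S a /\ S b.

Lemma trans_clos_field a b : trans_clos R a b -> S a /\ S b.
Proof.
by move: a b; apply: trans_clos_ind => // x y z [Sx _] [_ Sz].
Qed.

Lemma refl_trans_clos_partial_order_on :
    (forall a b, trans_clos R a b -> trans_clos R b a -> a = b) ->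
  partial_order_on S (fun a b => trans_clos R a b \/ (a = b /\ S a)).
Proof.
move=> R_anti; split; [|split; [|split]].
- by move=> a b [/trans_clos_field|[<-]].
- by move=> a Sa; right.
- by move=> a b _ _ [ab|[]] // [ba|[]] //; exact: R_anti.
- move=> a b c _ _ _ [ab|[<- _]] // [bc|[<- _]]; last by left.
  by left; apply: trans_clos_trans ab bc.
Qed.

End TransClos.

Lemma ord3P (j : 'I_3) : [\/ j = i0, j = i1 | j = i2].
Proof.
case: j => -[|[|[|//]]] lt_j; [constructor 1|constructor 2|constructor 3];
  exact: val_inj.
Qed.

Variant perm3_spec : 'I_3 -> 'I_3 -> 'I_3 -> Prop :=
  | Perm3_012 : perm3_spec i0 i1 i2
  | Perm3_021 : perm3_spec i0 i2 i1
  | Perm3_102 : perm3_spec i1 i0 i2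
  | Perm3_120 : perm3_spec i1 i2 i0
  | Perm3_201 : perm3_spec i2 i0 i1
  | Perm3_210 : perm3_spec i2 i1 i0.

Lemma perm3P (s : {perm 'I_3}) : perm3_spec (s i0) (s i1) (s i2).
Proof.
have s_neq i j : i != j -> s i != s j by rewrite (inj_eq perm_inj).
move: (s_neq i0 i1 isT) (s_neq i0 i2 isT) (s_neq i1 i2 isT).
by case: (ord3P (s i0)) (ord3P (s i1)) (ord3P (s i2)) => -> [] -> [] -> //; constructor.
Qed.

Lemma trip_map (X Y : Type) (h : X -> Y) (x1 x2 x3 : X) (i : 'I_3) :
  trip (h x1) (h x2) (h x3) i = h (trip x1 x2 x3 i).
Proof. by rewrite /trip; case: (val i) => [|[|]]. Qed.

Lemma isosceles_base_le (Z Q : Type) (le : Q -> Q -> Prop) (q0 : Q) (d : Z -> Z -> Q)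
    (z1 z2 z3 : Z) :
  (forall q, le q q) -> is_Q_pseudoultrametric le q0 d ->
  d z1 z2 = d z2 z3 -> le (d z1 z3) (d z1 z2).
Proof.
move=> le_refl [d_sym [_ d_tri]] e12_23; have [s] := d_tri z1 z2 z3.
case: (perm3P s) => /=;
  rewrite ?(d_sym z2 z1) ?(d_sym z3 z1) ?(d_sym z3 z2) e12_23 => -[le_tri eq_tri].
all: first [ exact: le_tri
           | rewrite eq_tri; exact: le_refl
           | rewrite -eq_tri; exact: le_refl ].
Qed.

Lemma Q_ultrametric_sub (Z Q : Type) (le le' : Q -> Q -> Prop) (q0 : Q) (d : Z -> Z -> Q) :
  (forall p q, le p q -> le' p q) -> is_Q_ultrametric le q0 d -> is_Q_ultrametric le' q0 d.
Proof.
move=> le_le' [[d_sym [d_diag d_tri]] d_q0]; split=> //; split=> //; split=> //.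
move=> z1 z2 z3; have [s [le_tri eq_tri]] := d_tri z1 z2 z3.
by exists s; split; first exact: le_le'.
Qed.

Lemma poset_adjoin_bottom (Q : Type) (S : Q -> Prop) (R : Q -> Q -> Prop) (b0 : Q) :
    partial_order_on S R -> (forall b, S b -> R b0 b) ->
  is_poset (fun a b => a = b0 \/ R a b \/ a = b).
Proof.
move=> [R_field [_ [R_anti R_trans]]] b0_min.
have R_b0 a : R a b0 -> a = b0.
  by move=> Rab0; have [Sa Sb0] := R_field _ _ Rab0; apply: R_anti (b0_min _ Sa).
split; [|split].
- by move=> a; right; right.
- move=> a b [->|[Rab|//]] [eb|[Rba|eba]]; subst=> //.
  + exact/esym/R_b0.
  + exact: R_b0.
  + by have [Sa Sb] := R_field _ _ Rab; apply: R_anti.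
- move=> a b c [->|[Rab|->]] bc; [by left| |exact: bc].
  case: bc => [eb|[Rbc|<-]]; subst; [left; exact: R_b0| |by right; left].
  have [Sa Sb] := R_field _ _ Rab; have [_ Sc] := R_field _ _ Rbc.
  by right; left; apply: R_trans Rab Rbc.
Qed.

Lemma comb_similar_refl (X A : Type) (Phi : X -> X -> A) : comb_similar Phi Phi.
Proof.
by exists id, id; split=> //; split=> //; split; [move=> a ra; exists a|split=> //; exists id].
Qed.

Lemma comb_similar_pullback (X A Y B : Type) (Phi : X -> X -> A) (Psi : Y -> Y -> B) :
  comb_similar Phi Psi ->
  exists (f : A -> B) (h : X -> Y),
    [/\ forall a1 a2, rng Phi a1 -> rng Phi a2 -> f a1 = f a2 -> a1 = a2,
        bijective h & forall x y, Psi (h x) (h y) = f (Phi x y)].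
Proof.
move=> [f [g [_ [f_inj [_ [[h gK hK] PsiE]]]]]].
by exists f, h; split=> //; [exists g|move=> x y; rewrite PsiE !hK].
Qed.

Lemma u_rel_rng (X A : Type) (Phi : X -> X -> A) a b :
  u_rel Phi a b -> rng Phi a /\ rng Phi b.
Proof. by case=> ra [rb _]. Qed.

Lemma le_Phi_isosceles (X A : Type) (Phi : X -> X -> A) (x1 x2 x3 : X) :
  Phi x1 x2 = Phi x2 x3 -> le_Phi Phi (Phi x1 x3) (Phi x1 x2).
Proof.
move=> e; left; apply: trans_closW.
by split; [exists x1, x3|split; [exists x1, x2|exists x1, x2, x3]].
Qed.

Definition similar_to_ultrametric (ordered : forall Q : Type, (Q -> Q -> Prop) -> Prop)
    (X A : Type) (Phi : X -> X -> A) : Prop :=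
  exists (Q : Type) (le : Q -> Q -> Prop) (q0 : Q) (Z : Type) (d : Z -> Z -> Q),
    ordered Q le /\ is_smallest le q0 /\ inhabited Z /\
    is_Q_ultrametric le q0 d /\ comb_similar Phi d.

Definition ultrametric_conditions (X A : Type) (Phi : X -> X -> A) : Prop :=
  (forall x y, Phi x y = Phi y x) /\
  (forall a b, trans_clos (u_rel Phi) a b -> trans_clos (u_rel Phi) b a -> a = b) /\
  (exists a0, rng Phi a0 /\ forall x y, Phi x y = a0 <-> x = y) /\
  (forall x1 x2 x3 : X, exists s : {perm 'I_3},
     let x := trip x1 x2 x3 in Phi (x (s i0)) (x (s i1)) = Phi (x (s i1)) (x (s i2))).

Definition intrinsic_ultrametric (X A : Type) (Phi : X -> X -> A) : Prop :=
  exists b0, rng Phi b0 /\ (forall x y, Phi x y = b0 <-> x = y) /\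
    partial_order_on (rng Phi) (le_Phi Phi) /\
    (forall b, rng Phi b -> le_Phi Phi b0 b) /\
    is_Q_ultrametric (le_Phi Phi) b0 Phi.

Lemma Q_ultrametric_conditions (Z Q : Type) (le : Q -> Q -> Prop) (q0 : Q) (d : Z -> Z -> Q) :
  is_poset le -> inhabited Z -> is_Q_ultrametric le q0 d -> ultrametric_conditions d.
Proof.
move=> [le_refl [le_anti le_trans]] [z] [d_pum d_q0].
have [d_sym [d_diag d_tri]] := d_pum.
have u_le a b : u_rel d a b -> le a b.
  by case=> _ [_ [z1 [z2 [z3 [-> [-> e]]]]]]; apply: isosceles_base_le d_pum e.
split=> //; split.
  move=> a b; have tc_le := trans_clos_ind u_le le_trans.
  by move=> /tc_le ab /tc_le ba; apply: le_anti.
split; first by exists q0; split=> //; exists z, z.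
by move=> z1 z2 z3; have [s [_ e]] := d_tri z1 z2 z3; exists s.
Qed.

Section Conditions.
Variables (X A : Type) (Phi : X -> X -> A).

Lemma similar_to_ultrametric_toset_poset :
  similar_to_ultrametric (@is_toset) Phi <-> similar_to_ultrametric (@is_poset) Phi.
Proof.
split=> -[Q [le [q0 [Z [d [le_ord [q0_min [Z_inh [d_um sim]]]]]]]]].
  by exists Q, le, q0, Z, d; have [le_po _] := le_ord.
have [le' [le'_tot le_le']] := poset_total_extension le_ord.
exists Q, le', q0, Z, d; split=> //; split; first by move=> q; apply: le_le'.
by split=> //; split=> //; apply: Q_ultrametric_sub d_um.
Qed.

Lemma comb_similar_conditions (Y B : Type) (Psi : Y -> Y -> B) :
  comb_similar Phi Psi -> ultrametric_conditions Psi -> ultrametric_conditions Phi.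
Proof.
move=> /comb_similar_pullback[f [h [f_inj [g hK gK] PsiE]]].
move=> [Psi_sym [Psi_anti [[b0 [[z _] b0_diag]] Psi_tri]]].
have Phi_rng x y : rng Phi (Phi x y) by exists x, y.
have f_rng a : rng Phi a -> rng Psi (f a) by case=> x [y <-]; exists (h x), (h y).
have Phi_eq x y x' y' : Psi (h x) (h y) = Psi (h x') (h y') -> Phi x y = Phi x' y'.
  by rewrite !PsiE; apply: f_inj.
have u_rel_f a b : u_rel Phi a b -> u_rel Psi (f a) (f b).
  move=> [ra [rb [x1 [x2 [x3 [ea [eb e]]]]]]].
  split; [exact: f_rng|split; [exact: f_rng|]].
  by exists (h x1), (h x2), (h x3); rewrite !PsiE -ea -eb -e.
have tc_f a b : trans_clos (u_rel Phi) a b -> trans_clos (u_rel Psi) (f a) (f b).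
  move: a b; apply: trans_clos_ind => [a b ab|a b c].
    exact/trans_closW/u_rel_f.
  exact: trans_clos_trans.
split; first by move=> x y; apply: Phi_eq; rewrite Psi_sym.
split.
  move=> a b ab ba; have [ra rb] := trans_clos_field (@u_rel_rng _ _ Phi) ab.
  by apply: f_inj ra rb _; apply: Psi_anti; apply: tc_f.
split.
  have b0E : Psi (h (g z)) (h (g z)) = b0 by rewrite gK; apply/b0_diag.
  exists (Phi (g z) (g z)); split=> // x y; split=> [/(congr1 f)|->].
    by rewrite -!PsiE b0E => /b0_diag/(can_inj hK).
  by apply: Phi_eq; rewrite b0E; apply/b0_diag.
move=> x1 x2 x3; have [s e] := Psi_tri (h x1) (h x2) (h x3).
by exists s => /=; apply: Phi_eq; rewrite -!(trip_map h).
Qed.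

Lemma conditions_intrinsic_ultrametric :
  ultrametric_conditions Phi -> intrinsic_ultrametric Phi.
Proof.
move=> [Phi_sym [Phi_anti [[a0 [a0_rng a0_diag]] Phi_tri]]].
have Phi_diag x : Phi x x = a0 by apply/a0_diag.
exists a0; split=> //; split=> //; split; [|split].
- exact: refl_trans_clos_partial_order_on (@u_rel_rng _ _ Phi) Phi_anti.
- by move=> _ [x [y <-]]; rewrite -(Phi_diag x); apply: le_Phi_isosceles.
split=> //; split=> //; split=> // x1 x2 x3.
by have [s e] := Phi_tri x1 x2 x3; exists s; split=> //; apply: le_Phi_isosceles.
Qed.

Lemma intrinsic_ultrametric_conditions :
  intrinsic_ultrametric Phi -> ultrametric_conditions Phi.
Proof.
move=> [b0 [b0_rng [b0_diag [[_ [_ [le_anti _]]] [_ [[Phi_sym [_ Phi_tri]] _]]]]]].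
split=> //; split.
  move=> a b ab ba; have [ra rb] := trans_clos_field (@u_rel_rng _ _ Phi) ab.
  by apply: le_anti => //; left.
split; first by exists b0.
by move=> x1 x2 x3; have [s [_ e]] := Phi_tri x1 x2 x3; exists s.
Qed.

Lemma intrinsic_similar_to_ultrametric :
  inhabited X -> intrinsic_ultrametric Phi -> similar_to_ultrametric (@is_poset) Phi.
Proof.
move=> X_inh [b0 [_ [_ [le_po [b0_min Phi_um]]]]].
(* Q is all of A, so b0 must also lie below the values outside the range of Phi. *)
exists A, (fun a b => a = b0 \/ le_Phi Phi a b \/ a = b), b0, X, Phi.
split; first exact: poset_adjoin_bottom le_po b0_min.
split; first by left.
split=> //; split; last exact: comb_similar_refl.
by apply: Q_ultrametric_sub Phi_um => p q pq; right; left.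
Qed.

End Conditions.

Theorem corollary3p19 (X A : Type) (HX : inhabited X) (Phi : X -> X -> A) :
  [/\
   ((exists (Q : Type) (le : Q -> Q -> Prop) (q0 : Q) (Z : Type) (d : Z -> Z -> Q),
       is_toset le /\ is_smallest le q0 /\ inhabited Z /\
       is_Q_ultrametric le q0 d /\ comb_similar Phi d) <->
    (exists (Q : Type) (le : Q -> Q -> Prop) (q0 : Q) (Z : Type) (d : Z -> Z -> Q),
       is_poset le /\ is_smallest le q0 /\ inhabited Z /\
       is_Q_ultrametric le q0 d /\ comb_similar Phi d)),
   ((exists (Q : Type) (le : Q -> Q -> Prop) (q0 : Q) (Z : Type) (d : Z -> Z -> Q),
       is_poset le /\ is_smallest le q0 /\ inhabited Z /\
       is_Q_ultrametric le q0 d /\ comb_similar Phi d) <->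
    ((forall x y, Phi x y = Phi y x) /\
     (forall a b, trans_clos (u_rel Phi) a b -> trans_clos (u_rel Phi) b a -> a = b) /\
     (exists a0, rng Phi a0 /\ forall x y, Phi x y = a0 <-> x = y) /\
     (forall x1 x2 x3 : X, exists s : {perm 'I_3},
        let x := trip x1 x2 x3 in Phi (x (s i0)) (x (s i1)) = Phi (x (s i1)) (x (s i2)))))
 &
   (((forall x y, Phi x y = Phi y x) /\
     (forall a b, trans_clos (u_rel Phi) a b -> trans_clos (u_rel Phi) b a -> a = b) /\
     (exists a0, rng Phi a0 /\ forall x y, Phi x y = a0 <-> x = y) /\
     (forall x1 x2 x3 : X, exists s : {perm 'I_3},
        let x := trip x1 x2 x3 in Phi (x (s i0)) (x (s i1)) = Phi (x (s i1)) (x (s i2)))) <->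
    (exists b0, rng Phi b0 /\ (forall x y, Phi x y = b0 <-> x = y) /\
       partial_order_on (rng Phi) (le_Phi Phi) /\
       (forall b, rng Phi b -> le_Phi Phi b0 b) /\
       is_Q_ultrametric (le_Phi Phi) b0 Phi))].
Proof.
split; first exact: similar_to_ultrametric_toset_poset.
- split.
    move=> [Q [le [q0 [Z [d [le_po [_ [Z_inh [d_um sim]]]]]]]]].
    exact: comb_similar_conditions sim (Q_ultrametric_conditions le_po Z_inh d_um).
  by move=> /conditions_intrinsic_ultrametric; apply: intrinsic_similar_to_ultrametric.
- split; [exact: conditions_intrinsic_ultrametric|exact: intrinsic_ultrametric_conditions].
Qed.
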